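(* Let $n\ge 2$, $c\ge 2$, $d$ prime, and $f:\mathbb{Z}_c^n\to\mathbb{Z}_d$. The distribution $$p(\mathbf{m}|\mathbf{s})=\begin{cases} d^{1-n} & \text{if } \sum_{j=1}^n m_j\equiv f(\mathbf{s}) \pmod d,\\ 0&\text{otherwise},\end{cases}$$ is a vertex (extreme point) of the non-signaling polytope $\mathcal{NS}$ if and only if $f$ is not bi-partite linear.
   Context: $\mathcal{NS}$ is the convex polytope of conditional distributions $p(\mathbf{m}|\mathbf{s})$, $\mathbf{m}\in\mathbb{Z}_d^n$, $\mathbf{s}\in\mathbb{Z}_c^n$, that are non-signaling: for every subset $S$ of parties, the marginal of $(m_j)_{j\in S}$ depends only on $(s_j)_{j\in S}$. A bipartition $\{A,B\}$ of $\{1,\dots,n\}$ is a division into two disjoint non-empty sets whose union is $\{1,\dots,n\}$. The function $f$ is bi-partite linear if there exist a bipartition $\{A,B\}$ and functions $f^A$ of $\mathbf{s}^A=(s_j)_{j\in A}$ and $f^B$ of $\mathbf{s}^B=(s_j)_{j\in B}$, valued in $\mathbb{Z}_d$, with $f(\mathbf{s})=f^A(\mathbf{s}^A)+f^B(\mathbf{s}^B)$ (mod $d$) for all $\mathbf{s}$. *)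

From HB Require Import structures.
From mathcomp Require Import all_boot all_order all_algebra.
Set Implicit Arguments. Unset Strict Implicit. Unset Printing Implicit Defensive.
Import Order.TTheory GRing.Theory Num.Theory.
Local Open Scope ring_scope.

(* Outputs m in Z_d^n, inputs s in Z_c^n (inputs are mere labels: 'I_c). *)
Definition outs (n d : nat) := {ffun 'I_n -> 'Z_d}.
Definition ins (n c : nat) := {ffun 'I_n -> 'I_c}.

Definition behaviour (R : realFieldType) (n c d : nat) := outs n d -> ins n c -> R.

Definition is_cond_distr (R : realFieldType) n c d (p : behaviour R n c d) : Prop :=
  (forall m s, 0 <= p m s) /\ (forall s, \sum_(m : outs n d) p m s = 1).

Definition marginal (R : realFieldType) n c d (p : behaviour R n c d)
  (S : {set 'I_n}) (m0 : outs n d) (s : ins n c) : R :=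
  \sum_(m : outs n d | [forall j in S, m j == m0 j]) p m s.

Definition in_NS (R : realFieldType) n c d (p : behaviour R n c d) : Prop :=
  is_cond_distr p /\
  forall (S : {set 'I_n}) (m0 : outs n d) (s s' : ins n c),
    (forall j, j \in S -> s j = s' j) ->
    marginal p S m0 s = marginal p S m0 s'.

Definition is_vertex_NS (R : realFieldType) n c d (p : behaviour R n c d) : Prop :=
  in_NS p /\
  forall (q r : behaviour R n c d) (t : R),
    in_NS q -> in_NS r -> 0 < t -> t < 1 ->
    (forall m s, p m s = t * q m s + (1 - t) * r m s) ->
    (forall m s, q m s = p m s) /\ (forall m s, r m s = p m s).

Definition depends_only_on n c d (A : {set 'I_n}) (g : ins n c -> 'Z_d) : Prop :=
  forall s s' : ins n c, (forall j, j \in A -> s j = s' j) -> g s = g s'.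

Definition bipartite_linear n c d (f : ins n c -> 'Z_d) : Prop :=
  exists (A : {set 'I_n}) (fA fB : ins n c -> 'Z_d),
    [/\ A != set0, ~: A != set0,
        depends_only_on A fA, depends_only_on (~: A) fB &
        forall s, f s = fA s + fB s].

Definition pf (R : realFieldType) n c d (f : ins n c -> 'Z_d) : behaviour R n c d :=
  fun m s => if \sum_(j < n) m j == f s then ((d%:R : R) ^+ n.-1)^-1 else 0.

From HB Require Import structures.
From mathcomp Require Import all_boot all_order all_algebra.
From mathcomp Require Import ring.
Import Order.TTheory GRing.Theory Num.Theory.
Local Open Scope ring_scope.
Set Implicit Arguments. Unset Strict Implicit. Unset Printing Implicit Defensive.

(* (=>) If f = fA + fB along a bipartition {A, ~A}, the behaviour split_behaviour,
   uniform on the m whose partial sums over A and ~A are fA(s) and fB(s), is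
   non-signaling and dominated by d pf, yet differs from pf.  A vertex dominates no
   other non-signaling behaviour (vertex_dominated), so pf is not a vertex.

   (<=) Both components q of a convex decomposition of pf are non-signaling and
   supported like pf.  For a in Z_d^n let D_a(s) be the law of a.m under q(.|s).
   As a.m = (a - a_k).m + a_k f(s) on the support and the first term ignores s_k,
   changing s_k translates D_a(s) (dot_law_upd).  If D_a(s) is not uniform, the two
   orders of changing s_k and s_l (a_k <> a_l) give the same translation, so all
   mixed differences of f across {j | a_j = a_k} vanish and f is bi-partite linear
   (bipartite_of_mixed_diff).  Hence D_a(s) is uniform for nonconstant a, and
     sum_a D_a(s)(a.x) = d^(n-1) + (d^n - d^(n-1)) q(x|s)
   pins down q(x|s): q = pf (supported_NS_unique). *)

Section FunctionUpdate.
Variables (I : finType) (T : Type).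

Definition upd (s : {ffun I -> T}) (j : I) (v : T) : {ffun I -> T} :=
  [ffun i => if i == j then v else s i].

Lemma updE s j v i : upd s j v i = if i == j then v else s i.
Proof. by rewrite ffunE. Qed.

Lemma upd_comm s j l v w : j != l -> upd (upd s j v) l w = upd (upd s l w) j v.
Proof.
move=> jl; apply/ffunP => i; rewrite !updE.
by case: (i =P l) => [->|//]; rewrite eq_sym (negbTE jl).
Qed.

End FunctionUpdate.

Lemma local_of_single_changes (I : finType) (T : eqType) (U : Type) (C : {set I})
    (g : {ffun I -> T} -> U) :
  (forall s j v, j \notin C -> g (upd s j v) = g s) ->
  forall s s' : {ffun I -> T}, (forall j, j \in C -> s j = s' j) -> g s = g s'.
Proof.
move=> g_upd s s' sCs'.
have [k k_diff] : exists k, #|[set j | s j != s' j]| = k by eexists.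
elim: k s sCs' k_diff => [|k IHk] s sCs' k_diff.
  congr g; apply/ffunP => j; apply/eqP; apply: contraT => ne.
  by move: k_diff; rewrite (cardsD1 j) inE ne.
have : (0 < #|[set j | s j != s' j]|)%N by rewrite k_diff.
case/card_gt0P => j; rewrite inE => s'j.
have jC : j \notin C by apply: contra s'j => /sCs' ->.
rewrite -(g_upd s j (s' j) jC); apply: IHk.
  by move=> i /sCs'; rewrite updE; case: eqP => [->|].
have -> : [set i | upd s j (s' j) i != s' i] = [set i | s i != s' i] :\ j.
  by apply/setP => i; rewrite !inE updE; case: (i =P j) => [->|]; rewrite ?eqxx.
by move: k_diff; rewrite (cardsD1 j) inE s'j add1n => -[].
Qed.

Lemma big_change_one (I : finType) (V : zmodType) (P : pred I) (F G : I -> V) j :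
    (forall i, i != j -> G i = F i) ->
  \sum_(i | P i) G i = \sum_(i | P i) F i + (if P j then G j - F j else 0).
Proof.
move=> GF; case Pj: (P j).
  rewrite (bigD1 j) // [in RHS](bigD1 j) //= (eq_bigr F) => [|i /andP[_ /GF] //].
  by rewrite addrAC [F j + _]addrC subrK.
rewrite addr0; apply: eq_bigr => i Pi; apply: GF.
by apply: contraTneq Pi => ->; rewrite Pj.
Qed.

Lemma sum_upd_shift (I : finType) (V : zmodType) (P : pred I) (m : {ffun I -> V}) j e :
  \sum_(i | P i) upd m j (m j + e) i = \sum_(i | P i) m i + (if P j then e else 0).
Proof.
rewrite (@big_change_one _ _ P m (fun i => upd m j (m j + e) i) j) => [|i /negbTE ij].
  by rewrite updE eqxx [m j + e]addrC addrK.
by rewrite updE ij.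
Qed.

Lemma upd_shift_inj (I : finType) (V : zmodType) j (e : V) :
  injective (fun m : {ffun I -> V} => upd m j (m j + e)).
Proof.
move=> m m' /ffunP eq_upd; apply/ffunP => i.
have := eq_upd i; rewrite !updE; case: eqP => [->|//] _.
by have := eq_upd j; rewrite !updE eqxx => /addIr.
Qed.

Lemma shift_eq (V : zmodType) (x b b' : V) : (x + (b' - b) == b') = (x == b).
Proof.
apply/eqP/eqP => [h|->]; last by rewrite addrC subrK.
by rewrite -(addrK (b' - b) x) h opprB addrC subrK.
Qed.

Section PrimeResidues.
Variables (d : nat) (pd : prime d).

Lemma card_Zd : #|'Z_d| = d.
Proof. by rewrite card_ord Zp_cast // prime_gt1. Qed.

Lemma Zd_unit (t : 'Z_d) : t != 0 -> t \is a GRing.unit.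
Proof.
move=> nt; rewrite -[t]natr_Zp unitZpE ?prime_gt1 // prime_coprime // gtnNdvd //.
  by rewrite lt0n; apply: contra nt => /eqP t0; apply/eqP/val_inj.
by have := ltn_ord t; rewrite [X in (_ < X)%N]Zp_cast // prime_gt1.
Qed.

(* A function on Z_d invariant under a nonzero translation is constant, since any
   nonzero element generates Z_d. *)
Lemma Zd_translation_invariant (U : Type) (G : 'Z_d -> U) (t : 'Z_d) :
  t != 0 -> (forall x, G (x + t) = G x) -> forall x, G x = G 0.
Proof.
move=> nt Gt x.
have Gmul i : G (t *+ i) = G 0 by elim: i => [|i IHi]; rewrite ?mulr0n // mulrSr Gt.
by rewrite -(Gmul (x / t)) -mulr_natr natr_Zp mulrC divrK // Zd_unit.
Qed.

End PrimeResidues.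

Lemma constant_translate (T : eqType) d (G G' : 'Z_d -> T) (e : 'Z_d) :
  (forall b, G' b = G (b + e)) -> [forall b, G' b == G' 0] = [forall b, G b == G 0].
Proof.
move=> G'E; apply/forallP/forallP => G'_const b.
  have -> : G b = G' (b - e) by rewrite G'E subrK.
  have -> : G 0 = G' (- e) by rewrite G'E addNr.
  by rewrite (eqP (G'_const _)) (eqP (G'_const (- e))).
by rewrite !G'E add0r (eqP (G'_const _)) (eqP (G'_const e)).
Qed.

Lemma Zd_translation_rigid (T : eqType) d (G : 'Z_d -> T) (X Y : 'Z_d) : prime d ->
  (forall b, G (b + X) = G (b + Y)) -> ~~ [forall b, G b == G 0] -> X = Y.
Proof.
move=> pd GXY G_nonconst; apply/eqP; rewrite -subr_eq0; apply: contraNT G_nonconst.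
move=> XY_nz; apply/forallP => b; apply/eqP; apply: (Zd_translation_invariant pd XY_nz).
by move=> x; rewrite addrCA addrC GXY subrK.
Qed.

Lemma card_fiber_uniform (T V : finType) (L : T -> V) :
    (forall v v', exists h : T -> T,
       injective h /\ forall x, (L (h x) == v') = (L x == v)) ->
  forall v, (#|[set x | L x == v]| * #|V|)%N = #|T|.
Proof.
move=> fiber_inj.
have le_fiber v v' : (#|[set x | L x == v]| <= #|[set x | L x == v']|)%N.
  have [h [h_inj hL]] := fiber_inj v v'.
  rewrite -(card_imset _ h_inj); apply: subset_leq_card; apply/subsetP => y.
  by case/imsetP => x; rewrite !inE => Lx ->; rewrite hL.
move=> v; rewrite -[RHS]sum1_card (partition_big L predT) //= mulnC -sum_nat_const.
apply: eq_bigr => v' _.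
have -> : #|[set x | L x == v]| = #|[set x | L x == v']|.
  by apply/eqP; rewrite eqn_leq !le_fiber.
by rewrite -sum1_card; apply: eq_bigl => x; rewrite inE.
Qed.

Lemma card_outs n d : prime d -> #|outs n d| = (d ^ n)%N.
Proof. by move=> pd; rewrite card_ffun card_Zd // card_ord. Qed.

Definition dot n d (a m : outs n d) : 'Z_d := \sum_j a j * m j.

Lemma dot_upd_shift n d (a m : outs n d) j e :
  dot a (upd m j (m j + e)) = dot a m + a j * e.
Proof.
rewrite /dot (@big_change_one _ _ predT (fun i => a i * m i)
  (fun i => a i * upd m j (m j + e) i) j) => [|i /negbTE ij]; last by rewrite updE ij.
by rewrite updE eqxx mulrDr [a j * m j + _]addrC addrK.
Qed.

Lemma dot_subl n d (a m x : outs n d) : dot a m - dot a x = dot (m - x) a.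
Proof. by rewrite /dot -sumrB; apply: eq_bigr => j _; rewrite !ffunE; ring. Qed.

Lemma card_hyperplane n d (z : outs n d) (b : 'Z_d) : prime d -> (0 < n)%N -> z != 0 ->
  #|[set a : outs n d | dot z a == b]| = (d ^ n.-1)%N.
Proof.
move=> pd n0 nz.
have [j zj] : exists j, z j != 0.
  apply/existsP; apply: contraR nz; rewrite negb_exists => /forallP z0.
  by apply/eqP/ffunP => i; rewrite ffunE; apply/eqP; have := z0 i; rewrite negbK.
have shift_fiber v v' : exists h : outs n d -> outs n d,
    injective h /\ forall a, (dot z (h a) == v') = (dot z a == v).
  exists (fun a => upd a j (a j + (v' - v) / z j)); split; first exact: upd_shift_inj.
  by move=> a; rewrite dot_upd_shift mulrC divrK ?Zd_unit // shift_eq.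
have := card_fiber_uniform shift_fiber b; rewrite card_outs // card_Zd // => E.
apply/eqP; rewrite -(eqn_pmul2r (prime_gt0 pd)) E -expnSr prednK //.
Qed.

Lemma card_dot_coincide n d (m x : outs n d) : prime d -> (0 < n)%N ->
  #|[set a : outs n d | dot a m == dot a x]| = if m == x then (d ^ n)%N else (d ^ n.-1)%N.
Proof.
move=> pd n0; have [->|ne] := eqVneq m x.
  by rewrite -(card_outs n pd); apply: eq_card => a; rewrite !inE eqxx.
rewrite -(@card_hyperplane n d (m - x) 0 pd n0) ?subr_eq0 //.
by apply: eq_card => a; rewrite !inE -dot_subl subr_eq0.
Qed.

Definition partial_sums n d (A : {set 'I_n}) (m : outs n d) : 'Z_d * 'Z_d :=
  (\sum_(j in A) m j, \sum_(j in ~: A) m j).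

Lemma sum_partial_sums n d (A : {set 'I_n}) (m : outs n d) :
  \sum_j m j = (partial_sums A m).1 + (partial_sums A m).2.
Proof. by rewrite (bigID (mem A)) /=; congr (_ + _); apply: eq_bigl => j; rewrite inE. Qed.

Lemma partial_sums_upd n d (A : {set 'I_n}) (m : outs n d) j e :
  partial_sums A (upd m j (m j + e)) =
  if j \in A then ((partial_sums A m).1 + e, (partial_sums A m).2)
  else ((partial_sums A m).1, (partial_sums A m).2 + e).
Proof. by rewrite /partial_sums !sum_upd_shift inE; case: (j \in A); rewrite !addr0. Qed.

Lemma card_partial_sums n d (A : {set 'I_n}) (v : 'Z_d * 'Z_d) : prime d ->
  A != set0 -> ~: A != set0 ->
  (#|[set m : outs n d | partial_sums A m == v]| * d * d = d ^ n)%N.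
Proof.
move=> pd /set0Pn [j jA] /set0Pn [k kA'].
have k'A : k \notin A by rewrite inE in kA'.
have shift_fiber w w' : exists h : outs n d -> outs n d,
    injective h /\ forall m, (partial_sums A (h m) == w') = (partial_sums A m == w).
  exists (fun m => let m1 := upd m j (m j + (w'.1 - w.1)) in
                   upd m1 k (m1 k + (w'.2 - w.2))); split.
    by move=> x y /= /upd_shift_inj /upd_shift_inj.
  move=> m; rewrite /= partial_sums_upd (negbTE k'A) partial_sums_upd jA.
  by case: (partial_sums A m) w w' => x y [a b] [a' b'] /=; rewrite !xpair_eqE !shift_eq.
have := card_fiber_uniform shift_fiber v.
by rewrite card_prod card_Zd // card_outs // mulnA.
Qed.

Definition pmass (R : realFieldType) n d : R := ((d%:R : R) ^+ n.-1)^-1.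

Lemma pmass_gt0 R n d : prime d -> 0 < pmass R n d.
Proof. by move=> pd; rewrite invr_gt0 exprn_gt0 // ltr0n prime_gt0. Qed.

Lemma pmass_card R n d : prime d -> (d ^ n.-1)%:R * pmass R n d = 1.
Proof. by move=> pd; rewrite natrX mulfV // expf_neq0 // pnatr_eq0 -lt0n prime_gt0. Qed.

Definition agree n d (S : {set 'I_n}) (m m' : outs n d) : bool := [forall j in S, m j == m' j].

Lemma agree_refl n d S (m : outs n d) : agree S m m.
Proof. by apply/forallP => j; rewrite eqxx implybT. Qed.

Lemma agree_sym n d S (m m' : outs n d) : agree S m m' = agree S m' m.
Proof. by apply: eq_forallb => j; rewrite eq_sym. Qed.

Lemma agree_trans n d S (m1 m2 m3 : outs n d) : agree S m1 m2 -> agree S m2 m3 -> agree S m1 m3.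
Proof.
move=> /forallP a12 /forallP a23; apply/forallP => j; apply/implyP => jS.
by have := a12 j; have := a23 j; rewrite jS /= => /eqP <-.
Qed.

Lemma sum_agree_shift (V : nmodType) n d (S : {set 'I_n}) (m0 : outs n d)
    (F : outs n d -> V) j (e : 'Z_d) :
  j \notin S ->
  \sum_(m | agree S m m0) F (upd m j (m j + e)) = \sum_(m | agree S m m0) F m.
Proof.
move=> jS; rewrite [RHS](reindex_inj (@upd_shift_inj _ _ j e)) /=.
apply: eq_bigl => m; apply: eq_forallb => i; rewrite updE.
by case: (i =P j) => [->|//]; rewrite (negbTE jS).
Qed.

(* pf is a non-signaling behaviour: its marginal on a proper subset S of parties
   does not even depend on f, by shifting the output of a party outside S. *)
Lemma pf_NS R n c d (f : ins n c -> 'Z_d) : prime d -> (0 < n)%N -> in_NS (pf R f).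
Proof.
move=> pd n0; split; first split.
- by move=> m s; rewrite /pf; case: ifP => // _; apply/ltW/(pmass_gt0 R n pd).
- move=> s; have ones_nz : [ffun=> 1] != 0 :> outs n d.
    by apply/eqP => /ffunP/(_ (Ordinal n0)); rewrite !ffunE => /eqP; rewrite oner_eq0.
  rewrite /pf -big_mkcond (eq_bigl (mem [set a | dot [ffun=> 1] a == f s])) => [|m].
    rewrite sumr_const card_hyperplane // -(mulr_natr _ (d ^ n.-1)) mulrC.
    exact: pmass_card.
  by rewrite !inE /dot; congr (_ == _); apply: eq_bigr => j _; rewrite ffunE mul1r.
move=> S m0 s s' sSs'; rewrite /marginal /pf.
have [/forallP S_all | ] := boolP [forall j, j \in S].
  by have -> : s = s' by apply/ffunP => j; apply/sSs'.
rewrite negb_forall => /existsP [j jS].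
pose M (b : 'Z_d) := \sum_(m | agree S m m0) (if \sum_i m i == b then pmass R n d else 0).
have M_const b b' : M b = M b'.
  rewrite /M -(sum_agree_shift _ _ (b - b') jS).
  by apply: eq_bigr => m _; rewrite (sum_upd_shift predT) /= shift_eq.
exact: M_const.
Qed.

Lemma NS_affine R n c d (p q r : behaviour R n c d) (al be : R) :
  in_NS p -> in_NS q -> al + be = 1 ->
  (forall m s, r m s = al * p m s + be * q m s) -> (forall m s, 0 <= r m s) -> in_NS r.
Proof.
move=> [[_ p1] pNS] [[_ q1] qNS] ab1 rE r0; split; first split => //.
  by move=> s; under eq_bigr do rewrite rE; rewrite big_split /= -!mulr_sumr p1 q1 !mulr1.
move=> S m0 s s' sSs'; rewrite /marginal.
under eq_bigr do rewrite rE; under [RHS]eq_bigr do rewrite rE.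
rewrite !big_split /= -!mulr_sumr.
by have := pNS S m0 s s' sSs'; have := qNS S m0 s s' sSs'; rewrite /marginal => -> ->.
Qed.

(* A vertex p of NS dominates no other non-signaling behaviour: if t q <= p for
   some 0 < t < 1, then p = t q + (1 - t) r with r non-signaling, so q = p. *)
Lemma vertex_dominated R n c d (p q : behaviour R n c d) (t : R) :
  is_vertex_NS p -> in_NS q -> 0 < t -> t < 1 -> (forall m s, t * q m s <= p m s) ->
  forall m s, q m s = p m s.
Proof.
move=> [pNS p_extreme] qNS t0 t1 tq_le_p.
have t1' : 1 - t != 0 by rewrite subr_eq0 eq_sym lt_eqF.
pose r m s := (p m s - t * q m s) / (1 - t).
have rNS : in_NS r.
  apply: (NS_affine (al := (1 - t)^-1) (be := - t / (1 - t)) pNS qNS).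
  - by field.
  - by move=> m s; rewrite /r; field.
  - by move=> m s; rewrite /r divr_ge0 ?subr_ge0 // ltW // subr_gt0.
have [] // := p_extreme q r t qNS rNS t0 t1.
by move=> m s; rewrite /r; field.
Qed.

(* Under a non-signaling q, the expectation of a function of the outputs of the
   parties in S depends only on their inputs: group the outputs by their
   restriction to S, weighting each point by the inverse size of its class. *)
Lemma NS_local_expectation R n c d (q : behaviour R n c d) (S : {set 'I_n})
    (g : outs n d -> R) (s s' : ins n c) :
  in_NS q -> (forall m m', agree S m m' -> g m = g m') -> (forall j, j \in S -> s j = s' j) ->
  \sum_m g m * q m s = \sum_m g m * q m s'.
Proof.
move=> [_ qNS] g_loc sSs'.
pose N (m : outs n d) : R := (#|[set m' | agree S m m']|)%:R.
have N_nz m : N m != 0.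
  by rewrite pnatr_eq0 -lt0n; apply/card_gt0P; exists m; rewrite inE agree_refl.
have N_class m m' : agree S m m' -> N m' = N m.
  move=> mm'; congr (_%:R); apply: eq_card => x; rewrite !inE.
  apply/idP/idP => [m'x | mx]; first exact: agree_trans mm' m'x.
  by apply: (agree_trans _ mx); rewrite agree_sym.
have by_marginals s1 :
    \sum_m g m * q m s1 = \sum_m0 g m0 / N m0 * marginal q S m0 s1.
  rewrite /marginal; under [RHS]eq_bigr do rewrite mulr_sumr.
  rewrite (exchange_big_dep predT) //=; apply: eq_bigr => m _; rewrite -mulr_suml.
  rewrite (eq_big (fun m0 => agree S m m0) (fun=> g m / N m)) => [|//|m0 mm0].
    by rewrite sumr_const -(eq_card (in_set _)) -mulr_natr mulfVK.
  by rewrite (N_class _ _ mm0) (g_loc _ _ mm0).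
by rewrite !by_marginals; apply: eq_bigr => m0 _; rewrite (qNS S m0 s s' sSs').
Qed.

(* For f = fA + fB along {A, ~A}: the behaviour that is uniform on the outputs whose
   partial sums over A and over ~A are fA(s) and fB(s); its mass d^(2-n) is d pmass. *)
Definition split_behaviour R n c d (A : {set 'I_n}) (fA fB : ins n c -> 'Z_d) :
    behaviour R n c d :=
  fun m s => if partial_sums A m == (fA s, fB s) then d%:R * pmass R n d else 0.

Section SplitBehaviour.
Variables (R : realFieldType) (n c d : nat) (A : {set 'I_n}) (fA fB : ins n c -> 'Z_d).
Hypotheses (pd : prime d) (n2 : (2 <= n)%N) (A_nz : A != set0) (A'_nz : ~: A != set0).

(* Normalisation: each fiber of the partial sums has d^(n-2) points. *)
Lemma split_behaviour_sum1 s : \sum_m split_behaviour R A fA fB m s = 1.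
Proof.
have card_fiber : (#|[set m : outs n d | partial_sums A m == (fA s, fB s)]| * d = d ^ n.-1)%N.
  apply/eqP; rewrite -(eqn_pmul2r (prime_gt0 pd)) card_partial_sums //.
  by rewrite -expnSr prednK // ltnW.
rewrite /split_behaviour -big_mkcond.
rewrite (eq_bigl (mem [set m | partial_sums A m == (fA s, fB s)])) => [|m /=]; last by rewrite inE.
rewrite sumr_const -(mulr_natl (d%:R * pmass R n d)) mulrA -natrM card_fiber.
exact: pmass_card.
Qed.

(* Non-signaling: the marginal on S, as a function M of the two partial sums it
   prescribes, does not depend on the first one if some party of A lies outside S
   (shift that party's output), nor on the second if some party of ~A does. *)
Lemma split_behaviour_NS :
  depends_only_on A fA -> depends_only_on (~: A) fB -> in_NS (split_behaviour R A fA fB).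
Proof.
move=> fA_loc fB_loc; split; first split; last first.
- move=> S m0 s s' sSs'.
  pose M b := \sum_(m | agree S m m0)
                (if partial_sums A m == b then d%:R * pmass R n d else 0).
  have M_shift j (b b' : 'Z_d * 'Z_d) : j \notin S ->
      (if j \in A then b.2 = b'.2 else b.1 = b'.1) -> M b = M b'.
    move=> jS; rewrite /M; case jA: (j \in A) => /= eq_other.
      rewrite -(sum_agree_shift _ _ (b.1 - b'.1) jS); apply: eq_bigr => m _.
      rewrite partial_sums_upd jA; case: (partial_sums A m) b b' eq_other.
      by move=> x y [b1 b2] [b1' b2'] /= ->; rewrite !xpair_eqE shift_eq.
    rewrite -(sum_agree_shift _ _ (b.2 - b'.2) jS); apply: eq_bigr => m _.
    rewrite partial_sums_upd jA; case: (partial_sums A m) b b' eq_other.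
    by move=> x y [b1 b2] [b1' b2'] /= ->; rewrite !xpair_eqE shift_eq.
  change (M (fA s, fB s) = M (fA s', fB s')); transitivity (M (fA s', fB s)).
    have [AS|/subsetPn [j jA jS]] := boolP (A \subset S).
      by rewrite (fA_loc s s') // => j /(subsetP AS) /sSs'.
    by apply: (M_shift j) => //; rewrite jA.
  have [A'S|/subsetPn [j jA' jS]] := boolP (~: A \subset S).
    by rewrite (fB_loc s s') // => j /(subsetP A'S) /sSs'.
  by apply: (M_shift j) => //; move: jA'; rewrite inE => /negbTE ->.
- exact: split_behaviour_sum1.
move=> m s; rewrite /split_behaviour; case: ifP => // _.
by rewrite mulr_ge0 ?ler0n // ltW // pmass_gt0.
Qed.

Variable f : ins n c -> 'Z_d.
Hypothesis f_split : forall s, f s = fA s + fB s.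

(* d^-1 split_behaviour <= pf, since the partial sums determine the total sum. *)
Lemma split_behaviour_dominated m s : d%:R^-1 * split_behaviour R A fA fB m s <= pf R f m s.
Proof.
have d_nz : d%:R != 0 :> R by rewrite pnatr_eq0 -lt0n prime_gt0.
rewrite /split_behaviour /pf; case: ifP => [/eqP ps_m|_].
  by rewrite (sum_partial_sums A) ps_m f_split eqxx mulKf.
by rewrite mulr0; case: ifP => // _; apply/ltW/pmass_gt0.
Qed.

(* split_behaviour differs from pf: it vanishes on the outputs with the right total
   sum but partial sums (fA s + 1, fB s - 1). *)
Lemma split_behaviour_neq_pf s : exists m, split_behaviour R A fA fB m s <> pf R f m s.
Proof.
have card_fiber := card_partial_sums (fA s + 1, fB s - 1) pd A_nz A'_nz.
have [m] : exists m, m \in [set m : outs n d | partial_sums A m == (fA s + 1, fB s - 1)].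
  apply/card_gt0P; rewrite lt0n; apply/eqP => card0; move: card_fiber.
  by rewrite card0 !mul0n => /esym/eqP; rewrite expn_eq0 eqn0Ngt prime_gt0.
rewrite inE => /eqP ps_m; exists m; rewrite /split_behaviour /pf ps_m xpair_eqE.
have -> : (fA s + 1 == fA s) = false by rewrite -subr_eq0 addrAC subrr add0r oner_eq0.
rewrite (sum_partial_sums A) ps_m f_split addrACA subrr addr0 eqxx /=.
by move/eqP; rewrite eq_sym (gt_eqF (pmass_gt0 R n pd)).
Qed.

End SplitBehaviour.

(* If f is bi-partite linear, pf is not a vertex: it dominates d^-1 split_behaviour. *)
Lemma bipartite_not_vertex R n c d (f : ins n c -> 'Z_d) :
  prime d -> (2 <= n)%N -> (0 < c)%N -> bipartite_linear f -> ~ is_vertex_NS (pf R f).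
Proof.
move=> pd n2 c0 [A [fA [fB [A_nz A'_nz fA_loc fB_loc f_split]]]] pf_vertex.
have d_gt1 : 1 < d%:R :> R by rewrite ltr1n prime_gt1.
have q_NS := split_behaviour_NS R pd n2 A_nz A'_nz fA_loc fB_loc.
have pf_eq : forall m s, split_behaviour R A fA fB m s = pf R f m s.
  apply: (vertex_dominated pf_vertex q_NS (t := d%:R^-1)).
  - by rewrite invr_gt0 (lt_trans ltr01).
  - by rewrite invf_lt1 // (lt_trans ltr01).
  - by move=> m s; apply: split_behaviour_dominated.
have [m neq_m] := split_behaviour_neq_pf R pd A_nz A'_nz f_split [ffun=> Ordinal c0].
exact: neq_m (pf_eq m _).
Qed.

Definition mixed_diff n c d (f : ins n c -> 'Z_d) (s : ins n c) j l (v w : 'I_c) : 'Z_d :=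
  f (upd (upd s j v) l w) - f (upd s j v) - f (upd s l w) + f s.

(* If all mixed differences of f across {A, ~A} vanish, then f is bi-partite
   linear: fA(s) := f(s on A, s0 off A) and fB := f - fA, where fB depends only on
   ~A because the increments of f along a party of A do not depend on ~A. *)
Lemma bipartite_of_mixed_diff n c d (f : ins n c -> 'Z_d) (A : {set 'I_n}) :
  (0 < c)%N -> A != set0 -> ~: A != set0 ->
  (forall s j l v w, j \in A -> l \notin A -> mixed_diff f s j l v w = 0) ->
  bipartite_linear f.
Proof.
move=> c0 A_nz A'_nz mixed0.
pose s0 : ins n c := [ffun=> Ordinal c0].
pose onA (s : ins n c) : ins n c := [ffun i => if i \in A then s i else s0 i].
exists A, (fun s => f (onA s)), (fun s => f s - f (onA s)); split=> //.
- by move=> s s' sAs' /=; congr f; apply/ffunP => i; rewrite !ffunE; case: ifP => // /sAs' ->.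
- apply: local_of_single_changes => s j v; rewrite in_setC negbK => jA.
  have onA_upd : onA (upd s j v) = upd (onA s) j v.
    by apply/ffunP => i; rewrite !ffunE; case: (i =P j) => [->|]; rewrite ?jA.
  pose incr x := f (upd x j v) - f x.
  have incr_onA : incr s = incr (onA s).
    apply: (@local_of_single_changes _ _ _ A incr) => [x l w lA|i iA]; last first.
      by rewrite ffunE iA.
    have jl : j != l by apply: contraNneq lA => <-.
    apply/eqP; rewrite -subr_eq0 -(mixed0 x j l v w jA lA) /incr /mixed_diff upd_comm //.
    by apply/eqP; ring.
  by rewrite onA_upd -[f (upd s j v)](subrK (f s)) -/(incr s) incr_onA /incr; ring.
- by move=> s; rewrite addrC subrK.
Qed.

Definition supported_on R n c d (f : ins n c -> 'Z_d) (q : behaviour R n c d) : Prop :=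
  forall (m : outs n d) s, \sum_j m j != f s -> q m s = 0.

Lemma mixture_supported R n c d (f : ins n c -> 'Z_d) (q r : behaviour R n c d) (t : R) :
  in_NS q -> in_NS r -> 0 < t -> t < 1 ->
  (forall m s, pf R f m s = t * q m s + (1 - t) * r m s) ->
  supported_on f q /\ supported_on f r.
Proof.
move=> [[q0 _] _] [[r0 _] _] t0 t1 pf_mix.
have t1' : 0 < 1 - t by rewrite subr_gt0.
suff vanish (m : outs n d) s : \sum_j m j != f s -> t * q m s = 0 /\ (1 - t) * r m s = 0.
  split=> m s /vanish [/eqP tq0 /eqP tr0].
    by move: tq0; rewrite mulf_eq0 gt_eqF //= => /eqP.
  by move: tr0; rewrite mulf_eq0 gt_eqF //= => /eqP.
move=> out_supp; have := pf_mix m s; rewrite /pf (negbTE out_supp) => /esym/eqP.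
rewrite paddr_eq0 ?(mulr_ge0 (ltW t0) (q0 m s)) ?(mulr_ge0 (ltW t1') (r0 m s)) //.
by case/andP => /eqP -> /eqP ->.
Qed.

Definition dot_law R n c d (q : behaviour R n c d) (a : outs n d) (s : ins n c) (b : 'Z_d) : R :=
  \sum_(m | dot a m == b) q m s.

Definition dot_law_uniform R n c d (q : behaviour R n c d) (a : outs n d) (s : ins n c) :=
  [forall b, dot_law q a s b == dot_law q a s 0].

Definition recentre n d (a : outs n d) k : outs n d := [ffun j => a j - a k].

Lemma dot_recentre n d (a m : outs n d) k : dot (recentre a k) m = dot a m - a k * \sum_j m j.
Proof. by rewrite /dot mulr_sumr -sumrB; apply: eq_bigr => j _; rewrite ffunE; ring. Qed.

Definition constant_vec n d (a : outs n d) : bool := [forall k, forall l, a k == a l].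

Section SupportedBehaviour.
Variables (R : realFieldType) (n c d : nat) (f : ins n c -> 'Z_d) (q : behaviour R n c d).
Hypotheses (pd : prime d) (qNS : in_NS q).

Lemma dot_law_sum1 (a : outs n d) s : \sum_b dot_law q a s b = 1.
Proof. by case: qNS => [[_ q1] _]; rewrite -(q1 s) (partition_big (dot a) predT). Qed.

(* If a_k = 0, the law of a.m does not depend on the input of party k, by
   non-signaling of the other parties. *)
Lemma dot_law_local (a : outs n d) (s : ins n c) b k v :
  a k = 0 -> dot_law q a (upd s k v) b = dot_law q a s b.
Proof.
move=> ak0.
have law_as_exp s1 : dot_law q a s1 b = \sum_m (if dot a m == b then 1 else 0) * q m s1.
  by rewrite /dot_law big_mkcond; apply: eq_bigr => m _; case: ifP; rewrite ?mul1r ?mul0r.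
rewrite !law_as_exp; apply: (NS_local_expectation (S := ~: [set k])) => //.
  move=> m m' /forallP mm'; congr (if _ then _ else _); congr (_ == _).
  apply: eq_bigr => j _; have [->|jk] := eqVneq j k; first by rewrite ak0 !mul0r.
  by have := mm' j; rewrite !inE jk /= => /eqP ->.
by move=> j; rewrite !inE updE => /negbTE ->.
Qed.

Hypothesis q_supp : supported_on f q.

Lemma dot_law_recentre (a : outs n d) (s : ins n c) b k :
  dot_law q a s b = dot_law q (recentre a k) s (b - a k * f s).
Proof.
rewrite /dot_law big_mkcond [RHS]big_mkcond; apply: eq_bigr => m _.
have [sum_m|out] := eqVneq (\sum_j m j) (f s); last by rewrite q_supp //; case: ifP; case: ifP.
by rewrite dot_recentre sum_m (inj_eq (addIr _)).
Qed.

Lemma dot_law_upd (a : outs n d) (s : ins n c) b k v :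
  dot_law q a (upd s k v) b = dot_law q a s (b - a k * f (upd s k v) + a k * f s).
Proof.
have ak0 : recentre a k k = 0 by rewrite ffunE subrr.
by rewrite (dot_law_recentre _ _ _ k) dot_law_local // [RHS](dot_law_recentre _ _ _ k) addrK.
Qed.

Lemma dot_law_uniform_indep (a : outs n d) (s s' : ins n c) :
  dot_law_uniform q a s = dot_law_uniform q a s'.
Proof.
apply: (@local_of_single_changes _ _ _ set0) => [x k v _|j]; last by rewrite inE.
apply: (constant_translate (e := - (a k * f (upd x k v)) + a k * f x)) => b.
by rewrite dot_law_upd addrA.
Qed.

(* If the law of a.m is not uniform, the mixed differences of f along any parties
   k, l with a_k <> a_l vanish: changing s_k then s_l, or s_l then s_k, translates
   that law by two amounts that must then agree. *)
Lemma mixed_diff_vanishes (a : outs n d) (s : ins n c) k l v w :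
  ~~ dot_law_uniform q a s -> a k != a l -> mixed_diff f s k l v w = 0.
Proof.
move=> nonunif akl; have kl : k != l by apply: contraNneq akl => ->.
set fkl := f (upd (upd s k v) l w); set fk := f (upd s k v); set fl := f (upd s l w).
pose X := - a l * fkl + a l * fk - a k * fk + a k * f s.
pose Y := - a k * fkl + a k * fl - a l * fl + a l * f s.
have via_kl b : dot_law q a (upd (upd s k v) l w) b = dot_law q a s (b + X).
  by rewrite !dot_law_upd -/fk -/fkl /X; congr dot_law; ring.
have via_lk b : dot_law q a (upd (upd s k v) l w) b = dot_law q a s (b + Y).
  by rewrite upd_comm // !dot_law_upd -upd_comm // -/fl -/fkl /Y; congr dot_law; ring.
have XY : X = Y.
  by apply: (Zd_translation_rigid pd _ nonunif) => b; rewrite -via_kl -via_lk.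
have akl_unit : a k - a l \is a GRing.unit by apply: Zd_unit; rewrite ?subr_eq0.
apply: (mulrI akl_unit); rewrite mulr0 /mixed_diff -/fkl -/fk -/fl.
have -> : (a k - a l) * (fkl - fk - fl + f s) = X - Y by rewrite /X /Y; ring.
by rewrite XY subrr.
Qed.

(* If f is not bi-partite linear, the law of a.m is uniform for nonconstant a:
   otherwise f would split along {j | a_j = a_k}. *)
Lemma dot_law_nonconstant (a : outs n d) k l :
  (0 < c)%N -> ~ bipartite_linear f -> a k != a l -> forall s b, dot_law q a s b = d%:R^-1.
Proof.
move=> c0 not_bl akl.
have unif s : dot_law_uniform q a s.
  apply: contraT => nonunif; exfalso; apply: not_bl.
  apply: (@bipartite_of_mixed_diff _ _ _ _ [set j | a j == a k]) => //.
  - by apply/set0Pn; exists k; rewrite inE.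
  - by apply/set0Pn; exists l; rewrite !inE eq_sym.
  move=> s1 j l1 v w; rewrite !inE => /eqP ajk al1.
  apply: (mixed_diff_vanishes (a := a) (s := s1)).
    by rewrite (dot_law_uniform_indep a s1 s).
  by rewrite ajk eq_sym.
move=> s b; have /forallP unif_s := unif s.
have d_nz : d%:R != 0 :> R by rewrite pnatr_eq0 -lt0n prime_gt0.
have := dot_law_sum1 a s; under eq_bigr do rewrite (eqP (unif_s _)).
rewrite sumr_const card_Zd // (eqP (unif_s b)) => sum1.
by apply: (mulIf d_nz); rewrite mulVf // mulr_natr.
Qed.

Lemma dot_law_constant (a : outs n d) (s : ins n c) (x : outs n d) :
  (0 < n)%N -> constant_vec a -> \sum_j x j = f s -> dot_law q a s (dot a x) = 1.
Proof.
move=> n0 /forallP a_const sum_x; case: qNS => [[_ q1] _].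
pose i0 := Ordinal n0.
have dotE m : dot a m = a i0 * \sum_j m j.
  rewrite /dot mulr_sumr; apply: eq_bigr => j _.
  by have /forallP/(_ i0)/eqP -> := a_const j.
rewrite -(q1 s) /dot_law big_mkcond; apply: eq_bigr => m _.
have [sum_m|out] := eqVneq (\sum_j m j) (f s); last by rewrite q_supp //; case: ifP.
by rewrite !dotE sum_m sum_x eqxx.
Qed.

Lemma sum_dot_laws_count (s : ins n c) (x : outs n d) :
  \sum_a dot_law q a s (dot a x) =
  \sum_m q m s * (#|[set a : outs n d | dot a m == dot a x]|)%:R.
Proof.
rewrite /dot_law (exchange_big_dep predT) //=; apply: eq_bigr => m _.
rewrite (eq_bigl (mem [set a : outs n d | dot a m == dot a x])) => [|a /=]; last by rewrite inE.
by rewrite sumr_const mulr_natr.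
Qed.

Lemma sum_dot_laws_point (s : ins n c) (x : outs n d) : (0 < n)%N ->
  \sum_a dot_law q a s (dot a x) =
  (d ^ n.-1)%:R + ((d ^ n)%:R - (d ^ n.-1)%:R) * q x s.
Proof.
move=> n0; case: qNS => [[_ q1] _].
rewrite sum_dot_laws_count (bigD1 x) //= card_dot_coincide // eqxx.
rewrite (eq_bigr (fun m => q m s * (d ^ n.-1)%:R)) => [|m /negbTE mx]; last first.
  by rewrite card_dot_coincide // mx.
rewrite -mulr_suml.
have -> : \sum_(m | m != x) q m s = 1 - q x s.
  by rewrite -(q1 s) [in RHS](bigD1 x) //= addrAC subrr add0r.
by ring.
Qed.

Lemma sum_dot_laws_value (s : ins n c) (x : outs n d) :
  (0 < n)%N -> (0 < c)%N -> ~ bipartite_linear f -> \sum_j x j = f s ->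
  \sum_a dot_law q a s (dot a x) =
  \sum_(a : outs n d) (if constant_vec a then 1 else d%:R^-1).
Proof.
move=> n0 c0 not_bl sum_x; apply: eq_bigr => a _; case: ifP => [a_const|].
  exact: dot_law_constant.
move/negbT; rewrite negb_forall => /existsP [k]; rewrite negb_forall => /existsP [l akl].
exact: (dot_law_nonconstant c0 not_bl akl).
Qed.

End SupportedBehaviour.

(* If f is not bi-partite linear, pf is the only non-signaling behaviour supported in
   the support of pf: comparing the two expressions of sum_a D_a(s)(a.x). *)
Lemma supported_NS_unique R n c d (f : ins n c -> 'Z_d) (q1 q2 : behaviour R n c d) :
  prime d -> (0 < n)%N -> (0 < c)%N -> ~ bipartite_linear f ->
  in_NS q1 -> supported_on f q1 -> in_NS q2 -> supported_on f q2 ->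
  forall m s, q1 m s = q2 m s.
Proof.
move=> pd n0 c0 not_bl q1NS q1_supp q2NS q2_supp x s.
have [sum_x|out] := eqVneq (\sum_j x j) (f s); last by rewrite q1_supp ?q2_supp.
have D_nz : (d ^ n)%:R - (d ^ n.-1)%:R != 0 :> R.
  by rewrite subr_eq0 eqr_nat neq_ltn !ltn_exp2l ?prime_gt1 // ltn_predL n0 orbT.
have := sum_dot_laws_point pd q1NS s x n0.
rewrite (sum_dot_laws_value pd q1NS q1_supp n0 c0 not_bl sum_x).
rewrite -(sum_dot_laws_value pd q2NS q2_supp n0 c0 not_bl sum_x) sum_dot_laws_point //.
by move=> /addrI /(mulfI D_nz) ->.
Qed.

Unset Implicit Arguments.

Theorem proposition2 (R : realFieldType) (n c d : nat)
  (hn : (2 <= n)%N) (hc : (2 <= c)%N) (hd : prime d)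
  (f : ins n c -> 'Z_d) :
  is_vertex_NS (pf R f) <-> ~ bipartite_linear f.
Proof.
have n0 : (0 < n)%N by apply: ltnW.
have c0 : (0 < c)%N by apply: ltnW.
split=> [pf_vertex f_bl | not_bl]; first exact: (bipartite_not_vertex hd hn c0 f_bl pf_vertex).
split=> [|q r t qNS rNS t0 t1 pf_mix]; first exact: pf_NS.
have [q_supp r_supp] := mixture_supported qNS rNS t0 t1 pf_mix.
have pfNS := pf_NS R f hd n0.
have pf_supp : supported_on f (pf R f) by move=> m s out; rewrite /pf (negbTE out).
by split=> m s; apply: (supported_NS_unique hd n0 c0 not_bl).
Qed.
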